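(* Let $\pi$ be an $r$-homogeneous strongly log-concave distribution with associated matroid $\mathcal{M}=(E,\mathcal{I})$, and let $I\in\mathcal{I}$ with $|I|\le r-2$. Then the modified log-Sobolev constant of the walk $P^{\wedge}_{I,1}$ satisfies $\rho(P^{\wedge}_{I,1})\ge\frac12$.
   Context: $\pi:2^{[n]}\to\mathbb{R}_{\ge0}$ has generating polynomial $g_\pi(x)=\sum_S\pi(S)\prod_{i\in S}x_i$; $r$-homogeneous means the support consists of $r$-sets; strongly log-concave means for every $J\subseteq[n]$, $\nabla^2\log(\partial_J g_\pi)$ is negative semidefinite at the all-ones vector. The support $\mathcal{B}$ is the set of bases of a rank-$r$ matroid $\mathcal{M}=(E,\mathcal{I})$. Weights: $w(J)=(r-|J|)!\sum_{B\in\mathcal{B},B\supseteq J}\pi(B)$ for $J\in\mathcal{I}$, $w(J)=0$ otherwise. Let $\Omega_I=\{v\in E\setminus I: I\cup\{v\}\in\mathcal{I}\}$ with distribution $\pi_{I,1}(v)=w(I\cup\{v\})/w(I)$. The walk $P^{\wedge}_{I,1}$ on $\Omega_I$: $P^{\wedge}_{I,1}(u,u)=\frac12$; $P^{\wedge}_{I,1}(u,v)=\frac{w(I\cup\{u,v\})}{2w(I\cup\{u\})}$ if $u\neq v$ and $I\cup\{u,v\}\in\mathcal{I}$; $0$ otherwise. It is reversible with stationary distribution $\pi_{I,1}$. For reversible $P$ with stationary $\mu$: $\mathcal{E}_P(f,g)=\sum_{x,y}\mu(x)f(x)[I-P](x,y)g(y)$, $\mathrm{Ent}_\mu(f)=\mathbb{E}_\mu(f\log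 f)-\mathbb{E}_\mu f\log\mathbb{E}_\mu f$ ($0\log0=0$), $\rho(P)=\inf\{\mathcal{E}_P(f,\log f)/\mathrm{Ent}_\mu(f): f\ge0,\ \mathrm{Ent}_\mu(f)\ne0\}$. *)

From HB Require Import structures.
From mathcomp Require Import all_boot all_order all_algebra.
From mathcomp Require Import mpoly.
From mathcomp Require Import all_classical all_reals all_analysis.
Set Implicit Arguments. Unset Strict Implicit. Unset Printing Implicit Defensive.
Import Order.TTheory GRing.Theory Num.Theory.
Local Open Scope ring_scope.

Section SLC.
Variables (R : realType) (n : nat).
Implicit Types (pi : {set 'I_n} -> R).

Definition genpoly pi : mpoly.mpoly n R :=
  \sum_(S : {set 'I_n}) pi S *: \prod_(i in S) mpoly.mpolyX R (mpoly.mnm1 i).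

Definition partialJ (J : {set 'I_n}) (p : mpoly.mpoly n R) : mpoly.mpoly n R :=
  foldr (fun i q => mpoly.mderiv i q) p (enum J).

Definition ones : 'I_n -> R := fun _ => 1.

(* Hessian of log h at the point a (for h(a) > 0), entries
   d^2/dx_i dx_j log h = (h * h_ij - h_i * h_j) / h^2. *)
Definition hess_log (h : mpoly.mpoly n R) (a : 'I_n -> R) (i j : 'I_n) : R :=
  (mpoly.meval a h * mpoly.meval a (mpoly.mderiv j (mpoly.mderiv i h))
   - mpoly.meval a (mpoly.mderiv i h) * mpoly.meval a (mpoly.mderiv j h))
  / (mpoly.meval a h) ^+ 2.

Definition nsd (M : 'I_n -> 'I_n -> R) : Prop :=
  forall v : 'I_n -> R, \sum_i \sum_j v i * M i j * v j <= 0.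

Definition homogeneous pi (r : nat) : Prop :=
  forall S, pi S != 0 -> #|S| = r.

(* strongly log-concave: for every J, Hess(log d_J g) at 1 is NSD
   (d_J g has nonnegative coefficients, so log d_J g is defined at 1
   exactly when d_J g is not the zero polynomial, i.e. d_J g(1) <> 0). *)
Definition strongly_log_concave pi : Prop :=
  forall J : {set 'I_n},
    mpoly.meval ones (partialJ J (genpoly pi)) != 0 ->
    nsd (hess_log (partialJ J (genpoly pi)) ones).

Definition pi_support pi : {set {set 'I_n}} := [set S | pi S != 0].

Definition matroid_bases (B : {set {set 'I_n}}) : Prop :=
  (exists B0 : {set 'I_n}, B0 \in B) /\
  forall B1 B2 : {set 'I_n}, B1 \in B -> B2 \in B -> forall x, x \in B1 :\: B2 ->
    exists2 y, y \in B2 :\: B1 & y |: (B1 :\ x) \in B.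

Definition indep (B : {set {set 'I_n}}) (J : {set 'I_n}) : bool :=
  [exists S in B, J \subset S].

Definition weight pi (r : nat) (J : {set 'I_n}) : R :=
  if indep (pi_support pi) J then
    ((r - #|J|)`!)%:R * \sum_(S in pi_support pi | J \subset S) pi S
  else 0.

Definition Omega pi (I : {set 'I_n}) : {set 'I_n} :=
  [set v | (v \notin I) && indep (pi_support pi) (v |: I)].

Definition piI1 pi r I (v : 'I_n) : R := weight pi r (v |: I) / weight pi r I.

Definition Pwedge pi r I (u v : 'I_n) : R :=
  if u == v then 2^-1
  else if indep (pi_support pi) (u |: (v |: I)) then
    weight pi r (u |: (v |: I)) / (2 * weight pi r (u |: I))
  else 0.

Definition elog (x : R) : \bar R := if 0 < x then (ln x)%:E else -oo%E.

Definition dirichlet_log (Om : {set 'I_n}) (mu : 'I_n -> R)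
    (P : 'I_n -> 'I_n -> R) (f : 'I_n -> R) : \bar R :=
  (\sum_(x in Om) \sum_(y in Om)
     (mu x * f x * ((x == y)%:R - P x y))%:E * elog (f y))%E.

Definition xlogx (x : R) : R := if x == 0 then 0 else x * ln x.

Definition expect (Om : {set 'I_n}) (mu : 'I_n -> R) (f : 'I_n -> R) : R :=
  \sum_(x in Om) mu x * f x.

Definition Ent (Om : {set 'I_n}) (mu : 'I_n -> R) (f : 'I_n -> R) : R :=
  expect Om mu (fun x => xlogx (f x)) - xlogx (expect Om mu f).

Definition mlsc (Om : {set 'I_n}) (mu : 'I_n -> R)
    (P : 'I_n -> 'I_n -> R) : \bar R :=
  ereal_inf [set (dirichlet_log Om mu P f * ((Ent Om mu f)^-1)%:E)%E
            | f in [set f : 'I_n -> R |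
                    (forall x, x \in Om -> 0 <= f x) /\ Ent Om mu f != 0]].

End SLC.

From HB Require Import structures.
From mathcomp Require Import all_boot all_order all_algebra.
From mathcomp Require Import mpoly.
From mathcomp Require Import ring zify lra.
From mathcomp Require Import all_classical all_reals all_analysis.
Import Order.TTheory GRing.Theory Num.Theory.
Set Implicit Arguments. Unset Strict Implicit. Unset Printing Implicit Defensive.
Local Open Scope ring_scope.

(** At the all-ones point, [∂_I g] has value [c I], gradient [c (I + i)] and
    Hessian [A i j = c (I + i + j)] (for [i <> j], [hess1]), where [c T] is
    the π-mass of the bases containing [T] ([upmass]). With [k = r - |I|],
    homogeneity gives the Euler identities [Σ_j A i j = (k - 1) c (I + i)]
    and [Σ_i c (I + i) = k c I]; testing the negative semidefinite Hessian of
    [log ∂_I g] on a shift of [f] then gives the reverse Cauchy-Schwarz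
    inequality [Z Σ A x y f x f y <= (Σ A x y f x)^2], [Z = Σ A].
    Off the diagonal [π_{I,1}(x) P(x,y) = A x y / (2 Z)], so
    [E(f, log f) = E[f log f] / 2 - Σ A x y f x log (f y) / (2 Z)].
    Bounding [log (f y)] by its tangent at [E f] and using the inequality
    above gives [Σ A x y f x log (f y) <= Z (E f) log (E f)], whence
    [E(f, log f) >= Ent f / 2]. If a transition leads from [f > 0] to
    [f = 0], then [E(f, log f) = +oo]. *)

Section SquarefreeMonomials.
Variables (R : comNzRingType) (n : nat).

Definition mderivs (s : seq 'I_n) (p : mpoly.mpoly n R) : mpoly.mpoly n R :=
  foldr (fun i q => mpoly.mderiv i q) p s.

Definition mprodX (T : {set 'I_n}) : mpoly.mpoly n R :=
  \prod_(i in T) mpoly.mpolyX R (mpoly.mnm1 i).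

Lemma mderivX1 (i j : 'I_n) :
  mpoly.mderiv i (mpoly.mpolyX R (mpoly.mnm1 j)) = (i == j)%:R.
Proof.
rewrite mpoly.mderivX mpoly.mnm1E eq_sym.
case: eqP => [->|_]; last by rewrite scale0r.
have -> : (mpoly.mnm1 j - mpoly.mnm1 j)%MM = 0%MM.
  by apply/mpoly.mnmP => k; rewrite mpoly.mnmBE subnn mpoly.mnm0E.
by rewrite scale1r mpoly.mpolyX0.
Qed.

Lemma mderiv_mprodX_notin (i : 'I_n) (T : {set 'I_n}) :
  i \notin T -> mpoly.mderiv i (mprodX T) = 0.
Proof.
move=> iNT; apply: (big_ind (fun p => mpoly.mderiv i p = 0)).
- by rewrite -mpoly.mpolyC1 mpoly.mderivC.
- by move=> p q dp dq; rewrite mpoly.mderivM dp dq mul0r mulr0 addr0.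
- by move=> j jT; rewrite mderivX1; case: eqP => // ij; rewrite ij jT in iNT.
Qed.

Lemma mderiv_mprodX (i : 'I_n) (T : {set 'I_n}) :
  mpoly.mderiv i (mprodX T) = if i \in T then mprodX (T :\ i) else 0.
Proof.
case: ifPn => iT; last exact: mderiv_mprodX_notin.
rewrite /mprodX (bigD1 i) //= mpoly.mderivM mderivX1 eqxx mul1r.
rewrite (eq_bigl (mem (T :\ i))) => [|j]; last by rewrite !inE andbC.
by rewrite mderiv_mprodX_notin ?setD11 // mulr0 addr0.
Qed.

Lemma meval_mprodX (v : 'I_n -> R) (T : {set 'I_n}) :
  mpoly.meval v (mprodX T) = \prod_(i in T) v i.
Proof.
rewrite /mprodX (big_morph _ (mpoly.mevalM v) (mpoly.meval1 v)).
by apply: eq_bigr => i _; rewrite mpoly.mevalXU.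
Qed.

Lemma mderivs_sum (s : seq 'I_n) (X : Type) (xs : seq X) (F : X -> mpoly.mpoly n R) :
  mderivs s (\sum_(x <- xs) F x) = \sum_(x <- xs) mderivs s (F x).
Proof.
elim: s => [|a s IH] //=; rewrite IH.
exact: (big_morph _ (@mpoly.mderivD _ _ a) (@mpoly.mderiv0 _ _ a)).
Qed.

Lemma mderivsZ (s : seq 'I_n) (c : R) (p : mpoly.mpoly n R) :
  mderivs s (c *: p) = c *: mderivs s p.
Proof. by elim: s => [|a s IH] //=; rewrite IH mpoly.mderivZ. Qed.

Lemma mderivs_mprodX (s : seq 'I_n) (T : {set 'I_n}) :
  mderivs s (mprodX T) =
  if uniq s && ([set:: s] \subset T) then mprodX (T :\: [set:: s]) else 0.
Proof.
elim: s => [|a s IH] /=.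
  by rewrite finset.set_nil finset.sub0set finset.setD0.
rewrite finset.set_cons IH finset.subUset finset.sub1set.
case: (uniq s) => /=; last by rewrite mpoly.mderiv0 andbF.
case: ([set:: s] \subset T) => /=; last by rewrite mpoly.mderiv0 !andbF.
rewrite mderiv_mprodX !inE andbT (andbC (a \in T)).
by case: ifP => // _; rewrite finset.setDDl finset.setUC.
Qed.

End SquarefreeMonomials.

Section UpperMass.
Variables (R : realType) (n r : nat) (pi : {set 'I_n} -> R).
Hypothesis pi_ge0 : forall S, 0 <= pi S.
Hypothesis pi_hom : homogeneous pi r.

Definition upmass (T : {set 'I_n}) : R := \sum_(S : {set 'I_n} | T \subset S) pi S.

Lemma meval_mderivs_genpoly (s : seq 'I_n) :
  mpoly.meval (@ones R n) (mderivs s (genpoly pi)) =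
  if uniq s then upmass [set:: s] else 0.
Proof.
rewrite /genpoly mderivs_sum (big_morph _ (mpoly.mevalD _) (mpoly.meval0 _)).
under eq_bigr => S _ do
  rewrite mderivsZ mpoly.mevalZ -/(mprodX R S) mderivs_mprodX fun_if.
case: (uniq s) => /=; last by apply: big1 => S _; rewrite mpoly.meval0 mulr0.
rewrite /upmass [RHS]big_mkcond; apply: eq_bigr => S _.
by case: ifP; rewrite ?meval_mprodX ?big1 ?mpoly.meval0 ?mulr1 ?mulr0.
Qed.

Lemma sum_upmass_setU1 (T : {set 'I_n}) :
  \sum_(v | v \notin T) upmass (v |: T) = (r - #|T|)%:R * upmass T.
Proof.
rewrite /upmass (exchange_big_dep (fun S : {set 'I_n} => T \subset S)) /=; last first.
  by move=> v S _; apply: fintype.subset_trans; apply: finset.subsetUr.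
rewrite big_distrr; apply: eq_bigr => S TS.
rewrite (eq_bigl (mem (S :\: T))) => [|v]; last first.
  by rewrite !inE finset.subUset finset.sub1set TS andbT.
rewrite sumr_const /=; have [->|piS] := eqVneq (pi S) 0; first by rewrite mul0rn mulr0.
by rewrite cardsD (finset.setIidPr TS) (pi_hom piS) mulr_natl.
Qed.

Lemma upmass_ge0 (T : {set 'I_n}) : 0 <= upmass T.
Proof. exact: sumr_ge0. Qed.

Lemma upmass_gt0 (T : {set 'I_n}) : indep (pi_support pi) T -> 0 < upmass T.
Proof.
move=> /existsP [S /andP [+ TS]]; rewrite inE => piS.
rewrite /upmass (bigD1 S) //= ltr_pwDl ?sumr_ge0 //.
by rewrite lt_def piS pi_ge0.
Qed.

Lemma upmass_eq0 (T : {set 'I_n}) : ~~ indep (pi_support pi) T -> upmass T = 0.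
Proof.
move=> TNind; apply: big1 => S TS; apply/eqP; apply: contraNT TNind => piS.
by apply/existsP; exists S; rewrite inE piS TS.
Qed.

Lemma indepS (T T' : {set 'I_n}) :
  T \subset T' -> indep (pi_support pi) T' -> indep (pi_support pi) T.
Proof.
move=> TT' /existsP [S /andP [suppS T'S]]; apply/existsP; exists S.
by rewrite suppS (fintype.subset_trans TT' T'S).
Qed.

Lemma weightE (J : {set 'I_n}) :
  weight pi r J = ((r - #|J|)`!)%:R * upmass J.
Proof.
rewrite /weight; case: ifPn => [_|JNind]; last by rewrite upmass_eq0 ?mulr0.
congr (_ * _); rewrite /upmass [RHS](bigID (mem (pi_support pi))) /=.
rewrite [X in _ + X]big1 ?addr0 => [|S /andP [_]]; last by rewrite inE negbK => /eqP.
by apply: eq_bigl => S; rewrite andbC.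
Qed.

Lemma weight_ge0 (J : {set 'I_n}) : 0 <= weight pi r J.
Proof. by rewrite weightE mulr_ge0 ?upmass_ge0. Qed.

Lemma natr_fact_sub (j : nat) : (j < r)%N ->
  ((r - j)`!)%:R = (r - j)%:R * ((r - j.+1)`!)%:R :> R.
Proof. by move=> lt_jr; rewrite -(subnSK lt_jr) factS natrM. Qed.

Lemma weight_setU1_div (v : 'I_n) (J : {set 'I_n}) :
  v \notin J -> (#|J| < r)%N -> indep (pi_support pi) J ->
  weight pi r (v |: J) / weight pi r J = upmass (v |: J) / ((r - #|J|)%:R * upmass J).
Proof.
move=> vNJ lt_Jr J_ind; rewrite !weightE cardsU1 vNJ add1n (natr_fact_sub lt_Jr).
have fact_gt0 : 0 < ((r - #|J|.+1)`!)%:R :> R by rewrite ltr0n fact_gt0.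
have sub_gt0 : 0 < (r - #|J|)%:R :> R by rewrite ltr0n subn_gt0.
have upmass_J_gt0 := upmass_gt0 J_ind.
by field; rewrite !gt_eqF.
Qed.

End UpperMass.

Section LogHessian.
Variables (R : realFieldType) (n : nat).

Definition qform (M : 'I_n -> 'I_n -> R) (v : 'I_n -> R) : R :=
  \sum_i \sum_j v i * M i j * v j.

Definition lform (g v : 'I_n -> R) : R := \sum_i g i * v i.

Lemma qform_log_hessian (h : R) (g : 'I_n -> R) (H : 'I_n -> 'I_n -> R) v :
  h != 0 ->
  qform (fun i j => (h * H i j - g i * g j) / h ^+ 2) v =
  (h * qform H v - lform g v ^+ 2) / h ^+ 2.
Proof.
move=> h0; rewrite /qform /lform [X in _ - X]expr2 big_distrl /=.
rewrite big_distrr /= -sumrB mulr_suml; apply: eq_bigr => i _.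
rewrite !big_distrr /= -sumrB mulr_suml; apply: eq_bigr => j _.
by field.
Qed.

Lemma qform_shift (H : 'I_n -> 'I_n -> R) (v : 'I_n -> R) (a : R) :
  qform H (fun i => v i - a) =
  qform H v - a * \sum_i \sum_j H i j * v j - a * \sum_i v i * \sum_j H i j
  + a ^+ 2 * \sum_i \sum_j H i j.
Proof.
rewrite /qform !big_distrr /= -!sumrB -big_split /=; apply: eq_bigr => i _.
rewrite !big_distrr /= -!sumrB -big_split /=; apply: eq_bigr => j _.
by ring.
Qed.

(* The hypotheses on [H] and [g] are Euler's identities for a [k]-homogeneous
   polynomial with value [h], gradient [g] and Hessian [H]; the bound is the
   last hypothesis at [v - a], where [a = lform g v / (k h)] cancels the
   linear terms. *)
Lemma log_hessian_nsd_qform_le (h k : R) (g : 'I_n -> R) (H : 'I_n -> 'I_n -> R) :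
  0 < h -> 0 < k ->
  (forall i j, H i j = H j i) ->
  (forall i, \sum_j H i j = (k - 1) * g i) ->
  \sum_i g i = k * h ->
  (forall w, qform (fun i j => (h * H i j - g i * g j) / h ^+ 2) w <= 0) ->
  forall v, h * qform H v <= (k - 1) / k * lform g v ^+ 2.
Proof.
move=> h_gt0 k_gt0 HC sumH sumg nsd v.
set a := lform g v / (k * h).
have := nsd (fun i => v i - a).
rewrite qform_log_hessian ?gt_eqF // qform_shift.
have sumHv : \sum_i \sum_j H i j * v j = (k - 1) * lform g v.
  rewrite exchange_big /lform big_distrr /=; apply: eq_bigr => j _.
  by rewrite -mulr_suml (eq_bigr _ (fun i _ => HC i j)) sumH mulrA.
have sumvH : \sum_i v i * \sum_j H i j = (k - 1) * lform g v.
  by rewrite /lform big_distrr /=; apply: eq_bigr => i _; rewrite sumH; ring.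
have sum2H : \sum_i \sum_j H i j = (k - 1) * (k * h).
  by rewrite (eq_bigr _ (fun i _ => sumH i)) -big_distrr /= sumg.
have lform_shift : lform g (fun i => v i - a) = lform g v - a * (k * h).
  by rewrite /lform -sumg big_distrr /= -sumrB; apply: eq_bigr => i _; ring.
rewrite sumHv sumvH sum2H lform_shift /a => le0.
rewrite -subr_le0; set L := lform g v; set Q := qform H v.
suff -> : h * Q - (k - 1) / k * L ^+ 2 =
  (h * (Q - L / (k * h) * ((k - 1) * L) - L / (k * h) * ((k - 1) * L) +
   (L / (k * h)) ^+ 2 * ((k - 1) * (k * h))) - (L - L / (k * h) * (k * h)) ^+ 2)
  / h ^+ 2 * h ^+ 2.
  by rewrite pmulr_lle0 ?exprn_gt0.
by field; rewrite ?gt_eqF.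
Qed.

End LogHessian.

Section EntropyInequalities.
Variables (R : realType) (n : nat).

Lemma ln_le_tangent (t c : R) : 0 < t -> 0 < c -> ln t <= ln c + t / c - 1.
Proof.
move=> t_gt0 c_gt0; have tc_gt0 := divr_gt0 t_gt0 c_gt0.
have : -1 < t / c - 1 by lra.
by move=> /le_ln1Dx; rewrite (addrC 1) subrK ln_div ?posrE //; lra.
Qed.

Lemma xlogx_ge_tangent (x c : R) : 0 <= x -> 0 < c -> x * ln c + x - c <= xlogx x.
Proof.
move=> x_ge0 c_gt0; rewrite /xlogx; case: ifPn => [/eqP ->|x_neq0].
  by rewrite mul0r !add0r oppr_le0 ltW.
have x_gt0 : 0 < x by rewrite lt_def x_neq0.
have := ler_wpM2l (ltW x_gt0) (ln_le_tangent c_gt0 x_gt0).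
by rewrite mulrBr !mulrDr mulr1 [x * (c / x)]mulrC divfK //; lra.
Qed.

Lemma Ent_ge0 (Om : {set 'I_n}) (mu f : 'I_n -> R) :
  (forall x, x \in Om -> 0 <= mu x) -> \sum_(x in Om) mu x = 1 ->
  (forall x, x \in Om -> 0 <= f x) -> 0 <= Ent Om mu f.
Proof.
move=> mu_ge0 mu_sum1 f_ge0; rewrite /Ent /expect subr_ge0.
set F := \sum_(x in Om) mu x * f x.
have muf_ge0 x : x \in Om -> 0 <= mu x * f x.
  by move=> xO; rewrite mulr_ge0 ?mu_ge0 ?f_ge0.
have [F0|F_neq0] := eqVneq F 0.
  rewrite F0 /xlogx eqxx; apply: sumr_ge0 => x xO.
  have /eqP := psumr_eq0P muf_ge0 F0 xO.
  by rewrite mulf_eq0 => /orP [] /eqP ->; rewrite ?mul0r // /xlogx eqxx mulr0.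
have F_gt0 : 0 < F by rewrite lt_def F_neq0 sumr_ge0.
apply: le_trans (_ : \sum_(x in Om) mu x * (f x * ln F + f x - F) <= _); last first.
  by apply: ler_sum => x xO; rewrite ler_wpM2l ?mu_ge0 ?xlogx_ge_tangent ?f_ge0.
have -> : \sum_(x in Om) mu x * (f x * ln F + f x - F) = F * ln F.
  under eq_bigr => x _ do rewrite mulrBr mulrDr mulrA.
  by rewrite sumrB big_split /= -!mulr_suml -/F mu_sum1; ring.
by rewrite /xlogx (negbTE F_neq0).
Qed.

End EntropyInequalities.

Section WeightedLogSum.
Variables (R : realType) (n : nat) (Om : {set 'I_n}).
Variables (A : 'I_n -> 'I_n -> R) (f : 'I_n -> R).
Hypothesis A_ge0 : forall x y, x \in Om -> y \in Om -> 0 <= A x y.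
Hypothesis f_ge0 : forall x, x \in Om -> 0 <= f x.
Hypothesis A_supp : forall x y, x \in Om -> y \in Om -> 0 < A x y -> 0 < f x -> 0 < f y.

Local Notation sumA := (\sum_(x in Om) \sum_(y in Om) A x y).
Local Notation sumAf := (\sum_(x in Om) \sum_(y in Om) A x y * f x).
Local Notation sumAff := (\sum_(x in Om) \sum_(y in Om) A x y * f x * f y).
Local Notation sumAfln := (\sum_(x in Om) \sum_(y in Om) A x y * f x * ln (f y)).

Lemma sum_mul_ln_le_tangent (c : R) : 0 < c ->
  sumAfln <= sumAf * ln c + sumAff / c - sumAf.
Proof.
move=> c_gt0.
have -> : sumAf * ln c + sumAff / c - sumAf =
    \sum_(x in Om) \sum_(y in Om) A x y * f x * (ln c + f y / c - 1).
  rewrite !mulr_suml -big_split -sumrB /=; apply: eq_bigr => x _.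
  by rewrite !mulr_suml -big_split -sumrB /=; apply: eq_bigr => y _; ring.
apply: ler_sum => x xO; apply: ler_sum => y yO.
have [->|Afx_neq0] := eqVneq (A x y * f x) 0; first by rewrite !mul0r.
have [A_gt0 fx_gt0] : 0 < A x y /\ 0 < f x.
  move: Afx_neq0; rewrite mulf_eq0 negb_or => /andP [Aneq fneq].
  by rewrite !lt_def Aneq fneq A_ge0 ?f_ge0.
apply: ler_wpM2l; first by rewrite mulr_ge0 ?ltW.
by rewrite ln_le_tangent // (A_supp xO yO).
Qed.

Lemma sum_mul_ln_le : 0 < sumA -> sumA * sumAff <= sumAf ^+ 2 ->
  sumAfln <= sumA * xlogx (sumAf / sumA).
Proof.
set Z := sumA; set S := sumAf; set Q := sumAff => Z_gt0 ZQ_le.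
have S_ge0 : 0 <= S.
  by apply: sumr_ge0 => x xO; apply: sumr_ge0 => y yO; rewrite mulr_ge0 ?A_ge0 ?f_ge0.
have [S0|S_neq0] := eqVneq S 0.
  move: ZQ_le; rewrite S0 expr0n /= pmulr_rle0 // => Q_le0.
  apply: le_trans (sum_mul_ln_le_tangent ltr01) _; rewrite -/S -/Q S0.
  by rewrite !mul0r /xlogx eqxx mulr0 divr1 add0r subr0.
have S_gt0 : 0 < S by rewrite lt_def S_neq0.
have SZ_gt0 := divr_gt0 S_gt0 Z_gt0.
apply: le_trans (sum_mul_ln_le_tangent SZ_gt0) _; rewrite -/S -/Q.
rewrite /xlogx gt_eqF // mulrA mulrCA divff ?gt_eqF // mulr1.
rewrite -addrA gerDl subr_le0 invf_div mulrA ler_pdivrMr // mulrC -expr2.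
exact: ZQ_le.
Qed.

End WeightedLogSum.

Section DirichletForm.
Variables (R : realType) (n : nat) (Om : {set 'I_n}).
Variables (mu : 'I_n -> R) (P : 'I_n -> 'I_n -> R) (f : 'I_n -> R).
Hypothesis mu_gt0 : forall x, x \in Om -> 0 < mu x.
Hypothesis P_ge0 : forall x y, 0 <= P x y.
Hypothesis f_ge0 : forall x, x \in Om -> 0 <= f x.

(* Uses [ln 0 = 0], whereas [dirichlet_log] uses [elog 0 = -oo]. *)
Definition dirichlet_ln : R :=
  \sum_(x in Om) \sum_(y in Om) mu x * f x * ((x == y)%:R - P x y) * ln (f y).

Lemma dirichlet_log_term_neqNy x y : x \in Om -> y \in Om ->
  ((mu x * f x * ((x == y)%:R - P x y))%:E * elog (f y) != -oo)%E.
Proof.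
move=> xO yO; rewrite /elog; case: ifPn => // fy_ngt0.
have fy0 : f y = 0 by apply/eqP; rewrite eq_le leNgt fy_ngt0 f_ge0.
set a := mu x * f x * _.
have a_le0 : a <= 0.
  rewrite /a; case: eqP => [->|_]; first by rewrite fy0 mulr0 mul0r.
  by rewrite /= sub0r mulrN oppr_le0 !mulr_ge0 // ?f_ge0 // ltW ?mu_gt0.
have [->|a_neq0] := eqVneq a 0; first by rewrite mul0e.
by rewrite lt0_muleNy // lte_fin lt_neqAle a_neq0.
Qed.

Lemma dirichlet_log_pinfty x y : x \in Om -> y \in Om ->
  0 < f x -> f y = 0 -> 0 < P x y -> dirichlet_log Om mu P f = +oo%E.
Proof.
move=> xO yO fx_gt0 fy0 Pxy_gt0.
have xy : x != y by apply: contraTneq fx_gt0 => ->; rewrite fy0 ltxx.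
have row_neqNy x' : x' \in Om -> (\sum_(y' in Om)
    (mu x' * f x' * ((x' == y')%:R - P x' y'))%:E * elog (f y') != -oo)%E.
  move=> x'O; rewrite esum_eqNy; apply/existsPn => y'.
  by apply/negP => /andP [y'O]; apply/negP; apply: dirichlet_log_term_neqNy.
apply/eqP; rewrite esum_eqy //; apply/existsP; exists x; rewrite xO /=.
rewrite esum_eqy => [|y' y'O]; last exact: dirichlet_log_term_neqNy.
apply/existsP; exists y; rewrite yO /= /elog fy0 ltxx (negbTE xy) /= sub0r mulrN.
by rewrite lt0_muleNy // lte_fin oppr_lt0 !mulr_gt0 ?mu_gt0.
Qed.

Lemma dirichlet_logE :
  (forall x y, x \in Om -> y \in Om -> 0 < f x -> f y = 0 -> P x y = 0) ->
  dirichlet_log Om mu P f = dirichlet_ln%:E.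
Proof.
move=> no_escape; rewrite /dirichlet_log /dirichlet_ln -sumEFin.
apply: eq_bigr => x xO; rewrite -sumEFin; apply: eq_bigr => y yO.
rewrite /elog; case: ifPn => // fy_ngt0.
have fy0 : f y = 0 by apply/eqP; rewrite eq_le leNgt fy_ngt0 f_ge0.
suff -> : mu x * f x * ((x == y)%:R - P x y) = 0 by rewrite mul0e mul0r.
have [->|xy] := eqVneq x y; first by rewrite fy0 mulr0 mul0r.
move: (f_ge0 xO); rewrite le0r => /orP [/eqP ->|fx_gt0]; first by rewrite mulr0 mul0r.
by rewrite (no_escape x y) //= subrr mulr0.
Qed.

End DirichletForm.

Section LocalWalk.
Variables (R : realType) (n r : nat) (pi : {set 'I_n} -> R) (I : {set 'I_n}).
Hypothesis pi_ge0 : forall S, 0 <= pi S.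
Hypothesis pi_hom : homogeneous pi r.
Hypothesis pi_slc : strongly_log_concave pi.
Hypothesis I_indep : indep (pi_support pi) I.
Hypothesis I_card : (#|I| + 2 <= r)%N.

Local Notation Om := (Omega pi I).
Local Notation mu := (piI1 pi r I).
Local Notation P := (Pwedge pi r I).
Local Notation k := ((r - #|I|)%:R : R).
Local Notation Z := (k * (k - 1) * upmass pi I).

Definition grad1 (i : 'I_n) : R := if i \in I then 0 else upmass pi (i |: I).

Definition hess1 (i j : 'I_n) : R :=
  if (i == j) || (i \in I) || (j \in I) then 0 else upmass pi (j |: (i |: I)).

Lemma meval_partialJ : mpoly.meval (@ones R n) (partialJ I (genpoly pi)) = upmass pi I.
Proof.
rewrite -[partialJ _ _]/(mderivs (enum I) (genpoly pi)) meval_mderivs_genpoly.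
by rewrite enum_uniq set_enum.
Qed.

Lemma meval_grad_partialJ (i : 'I_n) :
  mpoly.meval (@ones R n) (mpoly.mderiv i (partialJ I (genpoly pi))) = grad1 i.
Proof.
rewrite -[mpoly.mderiv _ _]/(mderivs (i :: enum I) (genpoly pi)).
rewrite meval_mderivs_genpoly /= mem_enum enum_uniq finset.set_cons set_enum /grad1.
by case: (i \in I).
Qed.

Lemma meval_hess_partialJ (i j : 'I_n) :
  mpoly.meval (@ones R n) (mpoly.mderiv j (mpoly.mderiv i (partialJ I (genpoly pi)))) =
  hess1 i j.
Proof.
rewrite -[mpoly.mderiv j _]/(mderivs (j :: i :: enum I) (genpoly pi)).
rewrite meval_mderivs_genpoly /= !in_cons !mem_enum enum_uniq !finset.set_cons set_enum.
by rewrite /hess1 (eq_sym j i); case: (i == j); case: (i \in I); case: (j \in I).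
Qed.

Lemma k_gt1 : 1 < k.
Proof. by rewrite ltr1n; lia. Qed.

Lemma k_gt0 : 0 < k.
Proof. exact: lt_trans k_gt1. Qed.

Lemma natr_sub_card_I_succ : (r - #|I|.+1)%:R = k - 1 :> R.
Proof.
have lt_Ir : (#|I| < r)%N by lia.
by rewrite -[in RHS](subnSK lt_Ir) -natr1 addrK.
Qed.

Lemma hess_log_partialJ :
  hess_log (partialJ I (genpoly pi)) (@ones R n) =
  fun i j => (upmass pi I * hess1 i j - grad1 i * grad1 j) / upmass pi I ^+ 2.
Proof.
apply/funext => i; apply/funext => j.
by rewrite /hess_log meval_partialJ !meval_grad_partialJ meval_hess_partialJ.
Qed.

Lemma hess1C (i j : 'I_n) : hess1 i j = hess1 j i.
Proof.
rewrite /hess1 (eq_sym i j).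
by case: (j == i); case: (i \in I); case: (j \in I); rewrite //= finset.setUCA.
Qed.

Lemma sum_hess1 (i : 'I_n) : \sum_j hess1 i j = (k - 1) * grad1 i.
Proof.
rewrite /grad1; case: ifPn => iI.
  by rewrite mulr0; apply: big1 => j _; rewrite /hess1 iI orbT.
have card_iI : #|i |: I| = #|I|.+1 by rewrite cardsU1 iI.
rewrite -natr_sub_card_I_succ -card_iI -sum_upmass_setU1 //.
rewrite [RHS]big_mkcond; apply: eq_bigr => j _.
by rewrite /hess1 (negbTE iI) !inE eq_sym orbF; case: (j == i); case: (j \in I).
Qed.

Lemma sum_grad1 : \sum_i grad1 i = k * upmass pi I.
Proof.
rewrite -sum_upmass_setU1 // [RHS]big_mkcond; apply: eq_bigr => i _.
by rewrite /grad1; case: (i \in I).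
Qed.

Lemma hess1_qform_le (v : 'I_n -> R) :
  upmass pi I * qform hess1 v <= (k - 1) / k * lform grad1 v ^+ 2.
Proof.
apply: (log_hessian_nsd_qform_le (upmass_gt0 pi_ge0 I_indep) k_gt0 hess1C).
- exact: sum_hess1.
- exact: sum_grad1.
have partialJ_neq0 : mpoly.meval (@ones R n) (partialJ I (genpoly pi)) != 0.
  by rewrite meval_partialJ gt_eqF ?upmass_gt0.
by move=> w; have := pi_slc partialJ_neq0 w; rewrite hess_log_partialJ.
Qed.

Lemma Z_gt0 : 0 < Z.
Proof. by rewrite !mulr_gt0 ?k_gt0 ?subr_gt0 ?k_gt1 ?upmass_gt0. Qed.

Lemma mem_Omega (x : 'I_n) :
  (x \in Om) = (x \notin I) && indep (pi_support pi) (x |: I).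
Proof. by rewrite inE. Qed.

Lemma upmass_Omega_gt0 (x : 'I_n) : x \in Om -> 0 < upmass pi (x |: I).
Proof. by rewrite mem_Omega => /andP [_]; apply: upmass_gt0. Qed.

Lemma grad1E (x : 'I_n) : grad1 x = if x \in Om then upmass pi (x |: I) else 0.
Proof.
rewrite /grad1 mem_Omega; case: (x \in I) => //=.
by case: ifPn => // xI_Nind; rewrite upmass_eq0.
Qed.

Lemma hess1_eq0 (x y : 'I_n) : ~~ ((x \in Om) && (y \in Om)) -> hess1 x y = 0.
Proof.
rewrite !mem_Omega /hess1 => xy_NOm.
case: (x == y) => //; case: (boolP (x \in I)) => //= xNI.
case: (boolP (y \in I)) => //= yNI; apply: upmass_eq0.
apply: contra xy_NOm => ind; rewrite xNI yNI /=.
apply/andP; split; apply: indepS ind; first exact: finset.subsetUr.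
by rewrite finset.setUCA finset.subsetUr.
Qed.

Lemma hess1_ge0 (x y : 'I_n) : 0 <= hess1 x y.
Proof. by rewrite /hess1; case: ifP => _; rewrite ?upmass_ge0. Qed.

Lemma hess1xx (x : 'I_n) : hess1 x x = 0.
Proof. by rewrite /hess1 eqxx. Qed.

Lemma piI1E (x : 'I_n) : x \in Om -> mu x = upmass pi (x |: I) / (k * upmass pi I).
Proof.
move=> xO; move: (xO); rewrite mem_Omega => /andP [xNI _].
by rewrite /piI1 weight_setU1_div //; lia.
Qed.

Lemma piI1_gt0 (x : 'I_n) : x \in Om -> 0 < mu x.
Proof.
by move=> xO; rewrite piI1E // divr_gt0 ?upmass_Omega_gt0 ?mulr_gt0 ?k_gt0 ?upmass_gt0.
Qed.

Lemma Pwedge_ge0 (x y : 'I_n) : 0 <= P x y.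
Proof.
rewrite /Pwedge; case: ifP => _; first by rewrite invr_ge0 ler0n.
by case: ifP => // _; rewrite divr_ge0 ?mulr_ge0 ?weight_ge0.
Qed.

Lemma piI1_Pwedge (x y : 'I_n) : x \in Om -> y \in Om ->
  mu x * P x y = if x == y then mu x / 2 else hess1 x y / (2 * Z).
Proof.
move=> xO yO; rewrite /Pwedge; case: eqVneq => [_|xy]; first by rewrite mulrC.
move: (xO) (yO); rewrite !mem_Omega => /andP [xNI xI_ind] /andP [yNI _].
rewrite /hess1 (negbTE xy) (negbTE xNI) (negbTE yNI) /=.
case: ifPn => [_|Nind]; last first.
  by rewrite finset.setUCA in Nind; rewrite upmass_eq0 // mul0r mulr0.
have yNxI : y \notin x |: I by rewrite !inE negb_or eq_sym xy.
have card_xI : #|x |: I| = #|I|.+1 by rewrite cardsU1 xNI.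
have halve (a b : R) : a / (2 * b) = a / b / 2 by rewrite invfM; ring.
rewrite halve finset.setUCA (weight_setU1_div pi_ge0 yNxI _ xI_ind);
  last by rewrite card_xI; lia.
rewrite card_xI natr_sub_card_I_succ piI1E //.
have := upmass_Omega_gt0 xO; have := upmass_gt0 pi_ge0 I_indep.
have := k_gt0; have : 0 < k - 1 by rewrite subr_gt0 k_gt1.
by move=> ? ? ? ?; field; rewrite !gt_eqF.
Qed.

Lemma sum_upmass_Omega : \sum_(x in Om) upmass pi (x |: I) = k * upmass pi I.
Proof.
rewrite -sum_grad1 [LHS]big_mkcond; apply: eq_bigr => x _.
by rewrite grad1E.
Qed.

Lemma sum_piI1 : \sum_(x in Om) mu x = 1.
Proof.
rewrite (eq_bigr _ piI1E) -mulr_suml sum_upmass_Omega divff //.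
by rewrite gt_eqF ?mulr_gt0 ?k_gt0 ?upmass_gt0.
Qed.

Lemma sum_hess1_Omega (x : 'I_n) : x \in Om ->
  \sum_(y in Om) hess1 x y = (k - 1) * upmass pi (x |: I).
Proof.
move=> xO; transitivity (\sum_y hess1 x y); last by rewrite sum_hess1 grad1E xO.
rewrite [LHS]big_mkcond; apply: eq_bigr => y _; case: ifPn => // yNO.
by rewrite hess1_eq0 // (negbTE yNO) andbF.
Qed.

Lemma sum2_hess1_mul (f : 'I_n -> R) :
  \sum_(x in Om) \sum_(y in Om) hess1 x y * f x = Z * expect Om mu f.
Proof.
rewrite /expect mulr_sumr; apply: eq_bigr => x xO.
rewrite -mulr_suml sum_hess1_Omega // piI1E //.
have := upmass_gt0 pi_ge0 I_indep; have := k_gt0 => ? ?.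
by field; rewrite !gt_eqF.
Qed.

Lemma sum2_hess1 : \sum_(x in Om) \sum_(y in Om) hess1 x y = Z.
Proof.
have := sum2_hess1_mul (fun _ => 1); rewrite /expect.
under eq_bigr do under eq_bigr do rewrite mulr1.
by under [X in _ = Z * X]eq_bigr do rewrite mulr1; rewrite sum_piI1 mulr1.
Qed.

Lemma hess1_cauchy_schwarz_rev (f : 'I_n -> R) :
  (\sum_(x in Om) \sum_(y in Om) hess1 x y) *
    (\sum_(x in Om) \sum_(y in Om) hess1 x y * f x * f y) <=
  (\sum_(x in Om) \sum_(y in Om) hess1 x y * f x) ^+ 2.
Proof.
pose v x := if x \in Om then f x else 0.
have qform_v : qform hess1 v = \sum_(x in Om) \sum_(y in Om) hess1 x y * f x * f y.
  rewrite /qform [RHS]big_mkcond; apply: eq_bigr => x _; rewrite /v.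
  case: ifP => xO; last by apply: big1 => y _; rewrite !mul0r.
  rewrite [RHS]big_mkcond; apply: eq_bigr => y _.
  by case: ifP => _; [ring | rewrite mulr0].
have sum2_v : \sum_(x in Om) \sum_(y in Om) hess1 x y * f x = (k - 1) * lform grad1 v.
  rewrite /lform big_mkcond mulr_sumr; apply: eq_bigr => x _; rewrite /v grad1E.
  case: ifP => xO; last by rewrite !mulr0.
  by rewrite -mulr_suml sum_hess1_Omega //; ring.
have := hess1_qform_le v; rewrite qform_v sum2_hess1 sum2_v => le.
have kk1_ge0 : 0 <= k * (k - 1) by rewrite mulr_ge0 ?ltW ?k_gt0 ?subr_gt0 ?k_gt1.
have -> : ((k - 1) * lform grad1 v) ^+ 2 =
    k * (k - 1) * ((k - 1) / k * lform grad1 v ^+ 2).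
  by have := k_gt0 => ?; field; rewrite gt_eqF.
by rewrite -mulrA ler_wpM2l.
Qed.

Lemma dirichlet_lnE (f : 'I_n -> R) :
  dirichlet_ln Om mu P f = expect Om mu (fun x => xlogx (f x)) / 2 -
  (\sum_(x in Om) \sum_(y in Om) hess1 x y * f x * ln (f y)) / (2 * Z).
Proof.
rewrite /dirichlet_ln /expect !mulr_suml -sumrB; apply: eq_bigr => x xO.
rewrite mulr_suml (bigD1 x) //= [in RHS](bigD1 x) //= hess1xx !mul0r add0r.
rewrite -sumrN; congr (_ + _).
  rewrite eqxx /Pwedge eqxx /xlogx; case: ifPn => [/eqP ->|_].
    by rewrite !(mulr0, mul0r).
  by rewrite /=; field.
apply: eq_bigr => y /andP [yO yx].
have := piI1_Pwedge xO yO; rewrite eq_sym (negbTE yx) /= => muP.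
transitivity (- (mu x * P x y) * f x * ln (f y)); first by ring.
by rewrite muP; ring.
Qed.

Lemma Ent_le_dirichlet_ln (f : 'I_n -> R) :
  (forall x, x \in Om -> 0 <= f x) ->
  (forall x y, x \in Om -> y \in Om -> 0 < f x -> f y = 0 -> P x y = 0) ->
  Ent Om mu f / 2 <= dirichlet_ln Om mu P f.
Proof.
move=> f_ge0 no_escape.
have hess1_supp x y : x \in Om -> y \in Om -> 0 < hess1 x y -> 0 < f x -> 0 < f y.
  move=> xO yO hxy_gt0 fx_gt0; rewrite lt_def f_ge0 // andbT.
  apply/eqP => fy0; have xy : x != y.
    by apply: contraTneq fx_gt0 => ->; rewrite fy0 ltxx.
  have := piI1_Pwedge xO yO; rewrite (negbTE xy) (no_escape x y) // mulr0.
  have twoZ_gt0 : 0 < 2 * Z by rewrite mulr_gt0 ?ltr0n ?Z_gt0.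
  by move/esym/eqP; rewrite gt_eqF // divr_gt0.
have sum2_gt0 : 0 < \sum_(x in Om) \sum_(y in Om) hess1 x y by rewrite sum2_hess1 Z_gt0.
have := sum_mul_ln_le (fun x y _ _ => hess1_ge0 x y) f_ge0 hess1_supp sum2_gt0
  (hess1_cauchy_schwarz_rev f).
rewrite sum2_hess1 sum2_hess1_mul [Z * _ / Z]mulrC mulKf ?gt_eqF ?Z_gt0 //.
set F := expect Om mu f; set G := \sum_(x in Om) \sum_(y in Om) _ * ln (f y) => G_le.
rewrite dirichlet_lnE /Ent -/F.
have Z_gt0 := Z_gt0.
have : G / Z <= xlogx F by rewrite ler_pdivrMr // mulrC.
have -> : G / (2 * Z) = G / Z / 2 by rewrite invfM; ring.
lra.
Qed.

Lemma dirichlet_log_ge_half_Ent (f : 'I_n -> R) :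
  (forall x, x \in Om -> 0 <= f x) -> Ent Om mu f != 0 ->
  ((2^-1 : R)%:E <= dirichlet_log Om mu P f * ((Ent Om mu f)^-1)%:E)%E.
Proof.
move=> f_ge0 Ent_neq0.
have mu_ge0 x : x \in Om -> 0 <= mu x by move/piI1_gt0/ltW.
have Ent_gt0 : 0 < Ent Om mu f by rewrite lt_def Ent_neq0 (Ent_ge0 mu_ge0 sum_piI1).
have [/existsP [x /existsP [y /and5P [xO yO fx_gt0 /eqP fy0 Pxy_gt0]]]|no_escape] :=
  boolP [exists x, exists y, [&& x \in Om, y \in Om, 0 < f x, f y == 0 & 0 < P x y]].
  rewrite (dirichlet_log_pinfty piI1_gt0 Pwedge_ge0 f_ge0 xO yO) //.
  by rewrite gt0_mulye ?leey // lte_fin invr_gt0.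
have {}no_escape x y : x \in Om -> y \in Om -> 0 < f x -> f y = 0 -> P x y = 0.
  move=> xO yO fx_gt0 fy0; apply/eqP; rewrite eq_le Pwedge_ge0 andbT leNgt.
  apply: contra no_escape => Pxy_gt0; apply/existsP; exists x; apply/existsP; exists y.
  by rewrite xO yO fx_gt0 fy0 eqxx.
rewrite dirichlet_logE // -EFinM lee_fin ler_pdivlMr // mulrC.
exact: Ent_le_dirichlet_ln.
Qed.

End LocalWalk.

Theorem lemma5p1 (R : realType) (n r : nat) (pi : {set 'I_n} -> R)
  (I : {set 'I_n}) :
  (forall S, 0 <= pi S) ->
  homogeneous pi r ->
  strongly_log_concave pi ->
  matroid_bases (pi_support pi) ->
  indep (pi_support pi) I ->
  (#|I| + 2 <= r)%N ->
  ((2^-1 : R)%:E <= mlsc (Omega pi I) (piI1 pi r I) (Pwedge pi r I))%E.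
Proof.
move=> pi_ge0 pi_hom pi_slc _ I_indep I_card.
apply: le_ereal_inf_tmp => _ [f [f_ge0 Ent_neq0] <-].
exact: dirichlet_log_ge_half_Ent.
Qed.
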